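(* Let $q$ be a prime integer different from $p$ and $0\le\ell\le r$. The ideals of $\Omega_{H_\ell}$ over $(q)\subseteq R_0$ (i.e. ideals $[I_0,\dots,I_\ell]$ with $I_0=q\mathbb{Z}$) are exactly the $\ell+1$ ideals $$\mathcal S^\ell(q)\subsetneq\mathcal L\mathcal S^{\ell-1}(q)\subsetneq\cdots\subsetneq\mathcal L^{\ell-k}\mathcal S^k(q)\subsetneq\cdots\subsetneq\mathcal L^\ell(q),$$ and all of them are prime.
   Context: Fix a prime $p$ and an integer $r\ge0$. For $0\le k\le r$ let $R_k$ be the commutative ring which is free as a $\mathbb{Z}$-module with basis $X_{k,0},\dots,X_{k,k}$ and multiplication $X_{k,i}X_{k,j}=p^{k-\max(i,j)}X_{k,\min(i,j)}$; thus $X_{k,k}=1$, and an integer $n$ is identified with $nX_{k,k}$. For $0\le k\le\ell\le r$ define: the additive map $\mathrm{ind}^\ell_k:R_k\to R_\ell$, $X_{k,i}\mapsto X_{\ell,i}$; the ring homomorphism $\mathrm{res}^\ell_k:R_\ell\to R_k$, $\mathrm{res}^\ell_k(X_{\ell,i})=p^{\ell-k}X_{k,i}$ if $i\le k$ and $=p^{\ell-i}$ if $i\ge k$; and the multiplicative map $\mathrm{jnd}^\ell_k:R_k\to R_\ell$, $$\mathrm{jnd}^\ell_k\Big(\sum_{i=0}^k m_iX_{k,i}\Big)=m_kX_{\ell,\ell}+\sum_{k\le i<\ell}\frac{m_k^{p^{\ell-i}}-m_k^{p^{\ell-i-1}}}{p^{\ell-i}}X_{\ell,i}+\sum_{0\le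 i<k}\frac{(\sum_{s=i}^k m_sp^{k-s})^{p^{\ell-k}}-(\sum_{s=i+1}^k m_sp^{k-s})^{p^{\ell-k}}}{p^{\ell-i}}X_{\ell,i}$$ ($m_i\in\mathbb{Z}$). For $k=\ell$ these maps are the identity. These data form the Burnside Tambara functor on $\mathbb{Z}/p^r\mathbb{Z}$; keeping indices $\le n$ gives $\Omega_{H_n}$. An ideal of $\Omega_{H_n}$ is a sequence $[I_0,\dots,I_n]$ of ideals $I_k\subseteq R_k$ such that for every $1\le k\le n$: $\mathrm{ind}^k_{k-1}(I_{k-1})\subseteq I_k$, $\mathrm{res}^k_{k-1}(I_k)\subseteq I_{k-1}$, $\mathrm{jnd}^k_{k-1}(I_{k-1})\subseteq I_k$; inclusion is componentwise. It is proper if $I_0\ne R_0$. A proper ideal is prime if for all $0\le\ell'\le k\le n$, $a\in R_k$, $b\in R_{\ell'}$: whenever $(\mathrm{jnd}^m_i\mathrm{res}^k_i(a))\cdot(\mathrm{jnd}^m_j\mathrm{res}^{\ell'}_j(b))\in I_m$ for all $0\le i\le k$, $0\le j\le\ell'$, $m=\max(i,j)$, then $a\in I_k$ or $b\in I_{\ell'}$. Operators: for an ideal $I\subseteq R_{k-1}$, $L(I)=(\mathrm{res}^k_{k-1})^{-1}(I)\subseteq R_k$ and $S(I)$ is the ideal of $R_k$ generated by $\mathrm{ind}^k_{k-1}(I)\cup\mathrm{jnd}^k_{k-1}(I)$; for an ideal $\mathscr I=[I_0,\dots,I_{k-1}]$ of $\Omega_{H_{k-1}}$, $\mathcal{L}\mathscr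 I=[I_0,\dots,I_{k-1},L(I_{k-1})]$, $\mathcal{S}\mathscr I=[I_0,\dots,I_{k-1},S(I_{k-1})]$; $\mathcal L^n,\mathcal S^n$ are iterates, and $(q)$ denotes the ideal $[q\mathbb{Z}]$ of $\Omega_{H_0}$. *)

(* Burnside Tambara functor on Z/p^r Z, truncated to H_n. *)
From HB Require Import structures.
From mathcomp Require Import all_boot all_order all_algebra.
Set Implicit Arguments. Unset Strict Implicit. Unset Printing Implicit Defensive.
Import Order.TTheory GRing.Theory Num.Theory.
Local Open Scope ring_scope.

(* R_k : free Z-module with basis X_{k,0..k}; element = coefficient vector. *)
Definition Rk (k : nat) : Type := {ffun 'I_k.+1 -> int}.

Definition mk (k : nat) (f : nat -> int) : Rk k := [ffun i : 'I_k.+1 => f (i : nat)].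

(* coefficient of X_{k,i} (0 if i > k) *)
Definition cf (k : nat) (a : Rk k) (i : nat) : int :=
  if (i <= k)%N then a (inord i) else 0.

Definition zeroR (k : nat) : Rk k := mk k (fun _ => 0).
Definition addR (k : nat) (a b : Rk k) : Rk k := mk k (fun i => cf a i + cf b i).
Definition oppR (k : nat) (a : Rk k) : Rk k := mk k (fun i => - cf a i).

(* X_{k,i} X_{k,j} = p^(k - max(i,j)) X_{k,min(i,j)} *)
Definition mulR (p k : nat) (a b : Rk k) : Rk k :=
  mk k (fun m => \sum_(i < k.+1) \sum_(j < k.+1)
          if minn i j == m then a i * b j * (p%:Z) ^+ (k - maxn i j) else 0).

Definition indR (k l : nat) (a : Rk k) : Rk l := mk l (fun m => cf a m).

(* res^l_k : X_{l,i} |-> p^(l-k) X_{k,i} (i <= k), p^(l-i) X_{k,k} (i >= k) *)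
Definition resR (p l k : nat) (a : Rk l) : Rk k :=
  mk k (fun m => if (m < k)%N then (p%:Z) ^+ (l - k) * cf a m
                 else \sum_(i < l.+1 | (k <= i)%N) (p%:Z) ^+ (l - i) * a i).

(* jnd^l_k (multiplicative transfer) *)
Definition jndR (p k l : nat) (a : Rk k) : Rk l :=
  let S (i : nat) : int := \sum_(i <= s < k.+1) cf a s * (p%:Z) ^+ (k - s) in
  mk l (fun i =>
    if i == l then cf a k
    else if (k <= i)%N then
      ((cf a k) ^+ (p ^ (l - i)) - (cf a k) ^+ (p ^ (l - i - 1))) %/ ((p%:Z) ^+ (l - i))
    else
      ((S i) ^+ (p ^ (l - k)) - (S i.+1) ^+ (p ^ (l - k))) %/ ((p%:Z) ^+ (l - i)))%Z.

Definition ideal (p k : nat) (J : Rk k -> Prop) : Prop :=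
  [/\ J (zeroR k),
      (forall a b, J a -> J b -> J (addR a b)),
      (forall a, J a -> J (oppR a)) &
      (forall a b, J a -> J (mulR p b a))].

(* a family [I_0, I_1, ...]; only components 0..n matter for Omega_{H_n} *)
Definition Fam := forall k : nat, Rk k -> Prop.

Definition OmegaIdeal (p n : nat) (I : Fam) : Prop :=
  (forall k, (k <= n)%N -> ideal p (I k)) /\
  (forall k, (k < n)%N ->
     [/\ (forall x : Rk k, I k x -> I k.+1 (indR k.+1 x)),
         (forall x : Rk k.+1, I k.+1 x -> I k (resR p k x)) &
         (forall x : Rk k, I k x -> I k.+1 (jndR p k.+1 x))]).

Definition PrimeIdeal (p n : nat) (I : Fam) : Prop :=
  ~ (forall a : Rk 0, I 0%N a) /\
  forall (k l' : nat) (a : Rk k) (b : Rk l'), (l' <= k)%N -> (k <= n)%N ->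
    (forall i j, (i <= k)%N -> (j <= l')%N ->
       I (maxn i j) (mulR p (jndR p (maxn i j) (resR p i a))
                            (jndR p (maxn i j) (resR p j b)))) ->
    I k a \/ I l' b.

Definition Lop (p k : nat) (I : Rk k -> Prop) : Rk k.+1 -> Prop :=
  fun a => I (resR p k a).

Definition Sop (p k : nat) (I : Rk k -> Prop) : Rk k.+1 -> Prop :=
  fun a => forall J : Rk k.+1 -> Prop, ideal p J ->
    (forall x, I x -> J (indR k.+1 x)) -> (forall x, I x -> J (jndR p k.+1 x)) -> J a.

(* chain p q k = L^(...) S^k (q): component 0 is qZ, components 1..k apply S,
   later components apply L.  Restricted to 0..l it is L^(l-k) S^k (q). *)
Unset Implicit Arguments.
Fixpoint chain (p q k j : nat) : Rk j -> Prop :=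
  match j return Rk j -> Prop with
  | 0 => fun a => (q%:Z %| a ord0)%Z
  | j'.+1 => if (j' < k)%N then @Sop p j' (chain p q k j') else @Lop p j' (chain p q k j')
  end.

Set Implicit Arguments.
Definition incl (n : nat) (I J : Fam) : Prop :=
  forall k, (k <= n)%N -> forall a, I k a -> J k a.

Definition strict_incl (n : nat) (I J : Fam) : Prop :=
  incl n I J /\ exists k, (k <= n)%N /\ exists a, J k a /\ ~ I k a.

Definition same (n : nat) (I J : Fam) : Prop :=
  forall k, (k <= n)%N -> forall a, I k a <-> J k a.

From HB Require Import structures.
From mathcomp Require Import all_boot all_order all_algebra.
From mathcomp Require Import finfield ring zify.
From Stdlib Require Import Classical.
Import Order.TTheory GRing.Theory Num.Theory.
Local Open Scope ring_scope.

(* The proof works in ghost coordinates.  For a = sum_s a_s X_{k,s} in R_k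
   and t <= k put  ghost_t(a) = sum_{t <= s <= k} a_s p^(k-s).  The map
   a |-> (ghost_t a)_t is an injective ring homomorphism R_k -> Z^(k+1),
   res preserves the coordinates t <= k, ind multiplies them by p (and kills
   the top one), and jnd raises them to the p-th power (keeping the top one).

   For a prime q <> p and K, j let  ghostIdeal K j  be the set of a in R_j
   with q | ghost_t(a) for all t <= min(j, K).  We show:
   - chain p q K j (= L^(j-K) S^K (q) at level j) is exactly ghostIdeal K j;
     the key point is that S(ghostIdeal) contains q, using Fermat's little
     theorem q^(p-1) = 1 mod p, and that ghostIdeal is generated by q;
   - these families are Omega-ideals, they are prime (q is prime in Z and
     ghost coordinates are multiplicative), and they strictly decrease in K;
   - an ideal J of R_j containing q is determined by the coordinates t on
     which q | ghost_t(J); for an Omega-ideal over (q) those coordinates form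
     an initial segment [0, K] at every level, hence it equals chain K. *)

Lemma cf_mk k f i : (i <= k)%N -> cf (mk k f) i = f i.
Proof. by move=> H; rewrite /cf H /mk ffunE inordK. Qed.

Lemma cf_out k (a : Rk k) i : (k < i)%N -> cf a i = 0.
Proof. by rewrite /cf ltnNge => /negbTE ->. Qed.

Lemma cf_ord k (a : Rk k) (i : 'I_k.+1) : cf a i = a i.
Proof. by rewrite /cf -ltnS ltn_ord inord_val. Qed.

Definition ghost (p : nat) {k : nat} (t : nat) (a : Rk k) : int :=
  \sum_(t <= s < k.+1) cf a s * (p%:Z) ^+ (k - s).

Definition mono (k : nat) (c : int) (i : nat) : Rk k :=
  mk k (fun m => if m == i then c else 0).

Lemma sum_nat_pick t n i (F : nat -> int) :
  \sum_(t <= s < n) (if s == i then F s else 0) =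
  if (t <= i)%N && (i < n)%N then F i else 0.
Proof.
elim: n => [|n IH]; first by rewrite big_geq // ltn0 andbF.
case: (leqP t n) => Htn.
  rewrite big_nat_recr //= IH.
  case: (eqVneq n i) => [<-|Hni].
    by rewrite ltnn andbF add0r ltnSn Htn.
  rewrite addr0; congr (if _ then _ else _).
  rewrite ltnS; congr (_ && _); by rewrite [in RHS]leq_eqVlt eq_sym (negbTE Hni).
rewrite big_geq //; case: (leqP t i) => Hti //=.
by rewrite ltnS leqNgt (leq_trans Htn Hti).
Qed.

Section Ghost.
Variable p : nat.

Lemma ghost_top k (a : Rk k) : ghost p k a = cf a k.
Proof. by rewrite /ghost big_nat1 subnn expr0 mulr1. Qed.

Lemma ghost_step k t (a : Rk k) : (t <= k)%N ->
  ghost p t a = cf a t * (p%:Z) ^+ (k - t) + ghost p t.+1 a.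
Proof. by move=> H; rewrite /ghost big_ltn. Qed.

Lemma ghost_over k t (a : Rk k) : (k < t)%N -> ghost p t a = 0.
Proof. by move=> H; rewrite /ghost big_geq. Qed.

Lemma ghost_mk k t f :
  ghost p t (mk k f) = \sum_(t <= s < k.+1) f s * (p%:Z) ^+ (k - s).
Proof. by apply: eq_big_nat => s /andP[_ Hs]; rewrite cf_mk. Qed.

Lemma ghost_add k t (a b : Rk k) : ghost p t (addR a b) = ghost p t a + ghost p t b.
Proof. by rewrite ghost_mk /ghost -big_split; apply: eq_bigr => s _; rewrite mulrDl. Qed.

Lemma ghost_opp k t (a : Rk k) : ghost p t (oppR a) = - ghost p t a.
Proof. by rewrite ghost_mk /ghost -sumrN; apply: eq_bigr => s _; rewrite mulNr. Qed.

Lemma ghost_zero k t : ghost p t (zeroR k) = 0.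
Proof. by rewrite ghost_mk big1 // => s _; rewrite mul0r. Qed.

Lemma ghost_mono k t c i : ghost p t (mono k c i) =
  if (t <= i)%N && (i < k.+1)%N then c * (p%:Z) ^+ (k - i) else 0.
Proof.
rewrite ghost_mk -(sum_nat_pick t k.+1 i (fun s => c * (p%:Z) ^+ (k - s))).
by apply: eq_bigr => s _; case: ifP; rewrite ?mul0r.
Qed.

(* The constant c = c X_{k,k} has all ghost coordinates equal to c. *)
Lemma ghost_const k t c : (t <= k)%N -> ghost p t (mono k c k) = c.
Proof. by move=> H; rewrite ghost_mono H ltnSn subnn expr0 mulr1. Qed.

Lemma ghost_ord k t (a : Rk k) :
  ghost p t a = \sum_(i < k.+1 | (t <= i)%N) a i * (p%:Z) ^+ (k - i).
Proof. by rewrite /ghost big_geq_mkord; apply: eq_big => [i|i _] //; rewrite cf_ord. Qed.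

Lemma ghost_mul k t (a b : Rk k) :
  ghost p t (mulR p a b) = ghost p t a * ghost p t b.
Proof.
rewrite ghost_mk big_geq_mkord /= !ghost_ord big_distrlr /=.
rewrite (eq_bigr (fun m : 'I_k.+1 => \sum_(i < k.+1) \sum_(j < k.+1)
   (if minn i j == m then
      a i * b j * (p%:Z) ^+ (k - maxn i j) * (p%:Z) ^+ (k - m) else 0))); last first.
  move=> m _; rewrite mulr_suml; apply: eq_bigr => i _; rewrite mulr_suml.
  by apply: eq_bigr => j _; case: ifP; rewrite ?mul0r.
transitivity (\sum_(i < k.+1) \sum_(j < k.+1) (if (t <= i)%N && (t <= j)%N then
   a i * (p%:Z) ^+ (k - i) * (b j * (p%:Z) ^+ (k - j)) else 0)); last first.
  rewrite [RHS]big_mkcond; apply: eq_bigr => i _; case: ifP => H /=.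
    by rewrite [RHS]big_mkcond.
  by rewrite big1_eq.
rewrite exchange_big /=; apply: eq_big => // i _.
rewrite exchange_big /=; apply: eq_big => // j _.
set m := minn i j.
transitivity (\sum_(t <= s < k.+1) (if s == m then
    a i * b j * (p%:Z) ^+ (k - maxn i j) * (p%:Z) ^+ (k - s) else 0)).
  by rewrite big_geq_mkord; apply: eq_big => [s|s _] //; rewrite eq_sym.
rewrite sum_nat_pick.
have Hm : (m < k.+1)%N by rewrite /m (leq_ltn_trans (geq_minl _ _)).
rewrite Hm andbT /m leq_min.
case: (leqP t i) => Hti /=; last by [].
case: (leqP t j) => Htj /=; last by [].
move: (nat_of_ord i) (nat_of_ord j) => i' j'.
by case: (leqP i' j') => Hij; ring.
Qed.

Hypothesis p_gt0 : (0 < p)%N.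

Lemma pexp_neq0 e : (p%:Z) ^+ e != 0.
Proof. by rewrite expf_neq0 // eqz_nat -lt0n. Qed.

Lemma ghost_inj k (a b : Rk k) :
  (forall t, (t <= k)%N -> ghost p t a = ghost p t b) -> a = b.
Proof.
move=> H; apply/ffunP => i.
have Hi : (i <= k)%N by rewrite -ltnS.
have Hnext : ghost p i.+1 a = ghost p i.+1 b.
  by case: (leqP i.+1 k) => Hk; [exact: H | rewrite !ghost_over].
have := H _ Hi; rewrite (@ghost_step k i a Hi) (@ghost_step k i b Hi) Hnext.
by move/addIr/(mulIf (pexp_neq0 (k - i))); rewrite !cf_ord.
Qed.

End Ghost.

Lemma ghost_res p l k t (a : Rk l) : (k <= l)%N -> (t <= k)%N ->
  ghost p t (resR p k a) = ghost p t a.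
Proof.
move=> Hkl Htk.
rewrite /ghost (big_nat_recr k) //= cf_mk // ltnn subnn expr0 mulr1.
rewrite [RHS](@big_cat_nat _ _ _ k) //=; last by lia.
congr (_ + _).
  apply: eq_big_nat => m /andP[_ Hm]; rewrite cf_mk ?(ltnW Hm) // Hm.
  have -> : (l - m = (l - k) + (k - m))%N by lia.
  by rewrite exprD; ring.
rewrite big_geq_mkord; apply: eq_big => [i|i _] //.
by rewrite cf_ord mulrC.
Qed.

Lemma ghost_ind p k t (a : Rk k) : (t <= k)%N ->
  ghost p t (indR k.+1 a) = (p%:Z) * ghost p t a.
Proof.
move=> Htk.
rewrite ghost_mk big_nat_recr /=; last by apply: leqW.
rewrite cf_out // mul0r addr0 /ghost mulr_sumr.
apply: eq_big_nat => m /andP[_ Hm].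
have -> : (k.+1 - m = (k - m).+1)%N by lia.
by rewrite exprS; ring.
Qed.

Lemma ghost_ind_top p k (a : Rk k) : ghost p k.+1 (indR k.+1 a) = 0.
Proof. by rewrite ghost_top cf_mk // cf_out. Qed.

Lemma ghost_jnd_top p i m (x : Rk i) : (i <= m)%N ->
  ghost p m (jndR p m x) = ghost p i x.
Proof. by move=> H; rewrite !ghost_top cf_mk // eqxx. Qed.

Lemma fermat_int p (x : int) : prime p -> (p%:Z %| x ^+ p - x)%Z.
Proof.
move=> pp; rewrite (dvdz_pcharf (pchar_Fp pp)) rmorphB /= rmorphXn /=.
by rewrite -[in X in _ ^+ X](card_Fp pp) expf_card subrr.
Qed.

Lemma lift_dvd p n (x y : int) : prime p -> (0 < n)%N ->
  ((p%:Z) ^+ n %| x - y)%Z -> ((p%:Z) ^+ n.+1 %| x ^+ p - y ^+ p)%Z.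
Proof.
move=> pp n0 H.
have Hp : (p%:Z %| x - y)%Z by apply: dvdz_trans H; apply: dvdz_exp.
rewrite subrXX exprSr; apply: dvdz_mul => //.
rewrite (eq_bigr (fun i : 'I_p =>
    (x ^+ (p.-1 - i) - y ^+ (p.-1 - i)) * y ^+ i + y ^+ p.-1)); last first.
  move=> i _; rewrite mulrBl -exprD subnK ?subrK //.
  by rewrite -ltnS prednK ?prime_gt0.
rewrite big_split /=; apply: rpredD.
  apply: rpred_sum => i _; apply: dvdz_mulr.
  by apply: dvdz_trans Hp _; rewrite subrXX dvdz_mulr.
by rewrite sumr_const card_ord -mulr_natr dvdz_mull // natz.
Qed.

Lemma telescope_down t k (f : nat -> int) : (t <= k)%N ->
  \sum_(t <= m < k) (f m - f m.+1) = f t - f k.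
Proof.
move=> H; rewrite -(opprB (f k)) -telescope_sumr // -sumrN.
by apply: eq_bigr => m _; rewrite opprB.
Qed.

(* jnd raises the ghost coordinates below the top to the p-th power; the
   divisions in its definition are exact by Fermat and lift_dvd. *)
Lemma ghost_jnd p k t (a : Rk k) : prime p -> (t <= k)%N ->
  ghost p t (jndR p k.+1 a) = (ghost p t a) ^+ p.
Proof.
move=> pp Htk.
rewrite /jndR ghost_mk big_nat_recr /=; last by apply: leqW.
rewrite big_nat_recr //= eqxx subnn expr0 mulr1.
rewrite (ltn_eqF (ltnSn k)) leqnn.
have -> : (k.+1 - k = 1)%N by lia.
rewrite expn1 subnn expn0 expr1 expr1 divzK; last exact: fermat_int.
rewrite (eq_big_nat _ _
  (F2 := fun m => (ghost p m a) ^+ p - (ghost p m.+1 a) ^+ p)); last first.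
  move=> m /andP[_ Hm].
  rewrite (ltn_eqF (leqW Hm)) leqNgt Hm /= divzK //.
  have -> : (k.+1 - m = (k - m).+1)%N by lia.
  apply: lift_dvd => //; first by lia.
  rewrite /ghost big_ltn ?addrK; last by lia.
  exact: dvdz_mull (dvdzz _).
by rewrite telescope_down // ghost_top; ring.
Qed.

Lemma ideal_iff p k (J J' : Rk k -> Prop) :
  (forall a, J a <-> J' a) -> ideal p J -> ideal p J'.
Proof.
move=> E [H0 Ha Ho Hm]; split.
- by apply/E.
- by move=> a b /E ? /E ?; apply/E; apply: Ha.
- by move=> a /E ?; apply/E; apply: Ho.
- by move=> a b /E ?; apply/E; apply: Hm.
Qed.

Section Primes.
Variables (p q : nat).
Hypotheses (pp : prime p) (pq : prime q) (qp : q != p).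

Lemma q_dvd_pXM e (x : int) : (q%:Z %| (p%:Z) ^+ e * x)%Z -> (q%:Z %| x)%Z.
Proof.
rewrite Gauss_dvdzr // coprimezXr // coprimezE /=.
by rewrite prime_coprime // dvdn_prime2 // eq_sym.
Qed.

Lemma q_euclid (x y : int) : (q%:Z %| x * y)%Z -> (q%:Z %| x)%Z \/ (q%:Z %| y)%Z.
Proof. by rewrite !dvdzE abszM Euclid_dvdM // => /orP. Qed.

Lemma q_ndvd_pX e : ~ (q%:Z %| (p%:Z) ^+ e)%Z.
Proof.
move=> H; have := @q_dvd_pXM e 1; rewrite mulr1 => /(_ H).
by rewrite dvdzE /= dvdn1 => /eqP q1; move: pq; rewrite q1.
Qed.

Lemma inv_mod_q (c : int) : ~ (q%:Z %| c)%Z -> exists u : int, (q%:Z %| u * c - 1)%Z.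
Proof.
move=> Hc; exists (c ^+ q.-2).
have Hq2 : (1 < q)%N by apply: prime_gt1.
have := @fermat_int q c pq.
have -> : c ^+ q - c = c * (c ^+ q.-2 * c - 1).
  rewrite mulrBr mulr1 -exprSr -exprS; congr (_ ^+ _ - _); lia.
rewrite Gauss_dvdzr // coprimezE prime_coprime //.
by apply/negP; rewrite -dvdzE.
Qed.

Lemma fermat_qp : (p%:Z %| (q%:Z) ^+ p.-1 - 1)%Z.
Proof.
have := @fermat_int p q%:Z pp.
have -> : (q%:Z) ^+ p - q%:Z = q%:Z * ((q%:Z) ^+ p.-1 - 1).
  by rewrite mulrBr mulr1 -exprS prednK ?prime_gt0.
rewrite Gauss_dvdzr // coprimezE /= prime_coprime // dvdn_prime2 //.
by rewrite eq_sym.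
Qed.

Let p_gt0 : (0 < p)%N := prime_gt0 pp.

Lemma ghost_dvd_mul j (a : Rk j) :
  (forall t, (t <= j)%N -> (q%:Z %| ghost p t a)%Z) ->
  exists b, a = mulR p b (mono j q%:Z j).
Proof.
move=> H.
have Hc : forall i, (i <= j)%N -> (q%:Z %| cf a i)%Z.
  move=> i Hi; apply: (@q_dvd_pXM (j - i)); rewrite mulrC.
  have := @ghost_step p j i a Hi => /(congr1 (fun z => z - ghost p i.+1 a)).
  rewrite addrK => <-; apply: rpredB; first exact: H.
  by case: (leqP i.+1 j) => Hij; [exact: H | rewrite ghost_over ?rpred0].
exists (mk j (fun i => divz (cf a i) q%:Z)).
apply: (ghost_inj _ p_gt0) => t Ht.
rewrite ghost_mul ghost_const // ghost_mk /ghost mulr_suml.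
apply: eq_big_nat => s /andP[_ Hs].
by rewrite mulrAC divzK // Hc // -ltnS.
Qed.

(* Any ideal of R_{j+1} containing ind(q) and jnd(q) contains q: indeed
   q = jnd(q) - c ind(q) with c p = q^(p-1) - 1. *)
Lemma ideal_q_of_ind_jnd j (J : Rk j.+1 -> Prop) : ideal p J ->
  J (indR j.+1 (mono j q%:Z j)) -> J (jndR p j.+1 (mono j q%:Z j)) ->
  J (mono j.+1 q%:Z j.+1).
Proof.
case=> _ Hadd Hopp Hmul Hi Hj.
set c : int := (((q%:Z) ^+ p.-1 - 1) %/ p%:Z)%Z.
have Hc : (q%:Z) ^+ p.-1 = c * p%:Z + 1 by rewrite divzK ?fermat_qp // subrK.
have -> : mono j.+1 q%:Z j.+1 = addR (jndR p j.+1 (mono j q%:Z j))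
             (oppR (mulR p (mono j.+1 c j.+1) (indR j.+1 (mono j q%:Z j)))).
  apply: (ghost_inj _ p_gt0) => t Ht.
  rewrite ghost_add ghost_opp ghost_mul !ghost_const //.
  case: (leqP t j) => Htj.
    rewrite ghost_jnd // ghost_ind // ghost_const //.
    rewrite -[in X in _ ^+ X](prednK p_gt0) exprS Hc; ring.
  have -> : t = j.+1 by lia.
  by rewrite ghost_ind_top ghost_jnd_top // ghost_const // mulr0 subr0.
by apply: Hadd => //; apply: Hopp; apply: Hmul.
Qed.

Lemma ghost_delta j s : (s <= j)%N -> exists v : Rk j, exists c : int,
  ~ (q%:Z %| c)%Z /\ forall t, (t <= j)%N -> ghost p t v = if t == s then c else 0.
Proof.
case: s => [|s] Hs.
  exists (mono j 1 0), ((p%:Z) ^+ j); split; first exact: q_ndvd_pX.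
  by move=> t Ht; rewrite ghost_mono leqn0 subn0 /= andbT mul1r.
exists (addR (mono j p%:Z s.+1) (mono j (-1) s)), ((p%:Z) ^+ (j - s)); split.
  exact: q_ndvd_pX.
move=> t Ht; rewrite ghost_add !ghost_mono.
have -> : (j - s = (j - s.+1).+1)%N by lia.
rewrite (_ : (s.+1 < j.+1)%N) // (_ : (s < j.+1)%N) /=; last by lia.
case: (ltngtP t s.+1) => Hts.
- by rewrite ltnS in Hts; rewrite Hts /= exprS; ring.
- by rewrite leqNgt (ltnW Hts) /= addr0.
- have -> : (t <= s)%N = false by lia.
  by rewrite /= exprS addr0.
Qed.

Definition ghostIdeal (K j : nat) (a : Rk j) : Prop :=
  forall t, (t <= j)%N -> (t <= K)%N -> (q%:Z %| ghost p t a)%Z.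

Lemma ideal_ghostIdeal K j : ideal p (ghostIdeal K j).
Proof.
split.
- by move=> t _ _; rewrite ghost_zero.
- by move=> a b Ha Hb t H1 H2; rewrite ghost_add rpredD ?Ha ?Hb.
- by move=> a Ha t H1 H2; rewrite ghost_opp rpredN Ha.
- by move=> a b Ha t H1 H2; rewrite ghost_mul dvdz_mull ?Ha.
Qed.

Lemma ghostIdeal_ind K j (x : Rk j) :
  ghostIdeal K j x -> ghostIdeal K j.+1 (indR j.+1 x).
Proof.
move=> H t H1 H2; case: (leqP t j) => Htj.
  by rewrite ghost_ind // dvdz_mull ?H.
have -> : t = j.+1 by lia.
by rewrite ghost_ind_top dvdz0.
Qed.

Lemma ghostIdeal_jnd K j (x : Rk j) :
  ghostIdeal K j x -> ghostIdeal K j.+1 (jndR p j.+1 x).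
Proof.
move=> H t H1 H2; case: (leqP t j) => Htj.
  by rewrite ghost_jnd // dvdz_exp ?prime_gt0 ?H.
have -> : t = j.+1 by lia.
by rewrite ghost_jnd_top // H //; lia.
Qed.

Lemma ghostIdeal_res K j (x : Rk j.+1) :
  ghostIdeal K j.+1 x -> ghostIdeal K j (resR p j x).
Proof. by move=> H t H1 H2; rewrite ghost_res // H //; lia. Qed.

Lemma ghost0 (a : Rk 0) : ghost p 0 a = a ord0.
Proof. by rewrite ghost_top /cf /=; congr (a _); apply: val_inj; rewrite /= inordK. Qed.

(* The chain of the theorem is described by ghost coordinates: below level K
   S applied to ghostIdeal is ghostIdeal (it contains q, and ghostIdeal is
   generated by q there), above level K L preserves ghostIdeal. *)
Lemma chain_ghostIdeal K j (a : Rk j) : chain p q K j a <-> ghostIdeal K j a.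
Proof.
elim: j a => [|j IH] a /=.
  split=> [H t Ht _|H]; last by rewrite -ghost0; apply: H.
  have -> : t = 0%N by lia.
  by rewrite ghost0.
case: ifP => HjK; last first.
  rewrite /Lop IH; split=> H t Ht HtK.
    by rewrite -(@ghost_res p j.+1 j t a) //; [apply: H | ..]; lia.
  by rewrite (@ghost_res p j.+1 j t a); [apply: H | ..]; lia.
split=> [H|H J HJ Hind Hjnd].
  apply: H; first exact: ideal_ghostIdeal.
    by move=> x /IH; apply: ghostIdeal_ind.
  by move=> x /IH; apply: ghostIdeal_jnd.
have Hq : forall i, ghostIdeal K i (mono i q%:Z i) by move=> i t Ht _; rewrite ghost_const.
have HQ : J (mono j.+1 q%:Z j.+1).
  by apply: ideal_q_of_ind_jnd => //; [apply: Hind | apply: Hjnd]; apply/IH.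
have [b ->] : exists b, a = mulR p b (mono j.+1 q%:Z j.+1).
  by apply: ghost_dvd_mul => t Ht; apply: H => //; lia.
by case: HJ => _ _ _; apply.
Qed.

Section IdealsOverQ.
Variables (j : nat) (J : Rk j -> Prop).
Hypotheses (HJ : ideal p J) (HJq : J (mono j q%:Z j)).

Definition forced (t : nat) : Prop := forall x, J x -> (q%:Z %| ghost p t x)%Z.

Lemma ghost_correct s (a : Rk j) : (s <= j)%N -> ~ forced s ->
  exists2 w, J w & (q%:Z %| ghost p s a - ghost p s w)%Z /\
    (forall t, (t <= j)%N -> t != s -> ghost p t w = 0).
Proof.
case: HJ => _ _ _ Hmul Hsj Hns.
have [x Jx Hx] : exists2 x, J x & ~ (q%:Z %| ghost p s x)%Z.
  apply: NNPP => Hn; apply: Hns => x Jx; apply: NNPP => Hx; apply: Hn; by exists x.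
have [v [c [Hc Hv]]] := @ghost_delta j s Hsj.
have Hcx : ~ (q%:Z %| c * ghost p s x)%Z by case/q_euclid.
have [u Hu] := @inv_mod_q _ Hcx.
exists (mulR p (mono j (ghost p s a * u) j) (mulR p v x)); first exact: Hmul (Hmul _ _ Jx).
split=> [|t Ht /negbTE Hts]; rewrite !ghost_mul ghost_const // Hv //; last first.
  by rewrite Hts mul0r mulr0.
rewrite eqxx.
have -> : ghost p s a - ghost p s a * u * (c * ghost p s x) =
          - (ghost p s a * (u * (c * ghost p s x) - 1)) by ring.
by rewrite rpredN dvdz_mull.
Qed.

Lemma ideal_of_forced (a : Rk j) :
  (forall t, (t <= j)%N -> forced t -> (q%:Z %| ghost p t a)%Z) -> J a.
Proof.
case: (HJ) => _ Hadd _ Hmul Ha.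
suff key : forall s (b : Rk j), (forall t, (t <= j)%N ->
    forced t \/ (s <= t)%N -> (q%:Z %| ghost p t b)%Z) -> J b.
  by apply: (key j.+1) => t Ht [Ft|Hlt]; [exact: Ha | lia].
elim=> [|s IH] b Hb.
  have [c ->] := @ghost_dvd_mul j b (fun t Ht => Hb t Ht (or_intror (leq0n t))).
  exact: Hmul.
case: (classic ((s <= j)%N -> forced s)) => [Hfs|Hns].
  apply: IH => t Ht [Ft|Hst]; first by apply: Hb => //; left.
  case: (eqVneq t s) => [Ets|Hts]; last by apply: Hb => //; right; lia.
  by apply: Hb => //; left; rewrite Ets; apply: Hfs; rewrite -Ets.
have [Hsj {}Hns] := imply_to_and _ _ Hns.
have [w Jw [Hsw Hw0]] := @ghost_correct s b Hsj Hns.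
have -> : b = addR (addR b (oppR w)) w.
  by apply: (ghost_inj _ p_gt0) => t Ht; rewrite !ghost_add ghost_opp subrK.
apply: Hadd => //; apply: IH => t Ht Hor; rewrite ghost_add ghost_opp.
case: (eqVneq t s) => [->|Hts] //.
rewrite Hw0 // subr0; apply: Hb => //.
by case: Hor => ?; [left | right; lia].
Qed.

End IdealsOverQ.

Lemma chain_OmegaIdeal K l : OmegaIdeal p l (chain p q K).
Proof.
split=> [k _|k _].
  by apply: (@ideal_iff _ _ (ghostIdeal K k)) (ideal_ghostIdeal K k) => a; rewrite chain_ghostIdeal.
split=> x; rewrite !chain_ghostIdeal;
  [exact: ghostIdeal_ind | exact: ghostIdeal_res | exact: ghostIdeal_jnd].
Qed.

Lemma not_ghostIdeal K j (a : Rk j) : ~ ghostIdeal K j a ->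
  exists t, [/\ (t <= j)%N, (t <= K)%N & ~ (q%:Z %| ghost p t a)%Z].
Proof.
move=> H; apply: NNPP => Hn; apply: H => t Ht HtK; apply: NNPP => Hd.
by apply: Hn; exists t.
Qed.

(* The chain members are prime: if a and b fail at coordinates t1, t2 <= K,
   the product of jnd(res a) and jnd(res b) at level max(t1, t2) fails at its
   top coordinate, since q is prime. *)
Lemma chain_PrimeIdeal K l : PrimeIdeal p l (chain p q K).
Proof.
split.
  move/(_ (mono 0 1 0)); rewrite chain_ghostIdeal => /(_ 0%N (leqnn 0) (leq0n K)).
  by rewrite ghost_const //; move: (q_ndvd_pX 0); rewrite expr0.
move=> k l' a b _ _ Hyp; rewrite !chain_ghostIdeal.
case: (classic (ghostIdeal K k a)) => Ha; first by left.
case: (classic (ghostIdeal K l' b)) => Hb; first by right.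
have [t1 [Ht1 Ht1K Hd1]] := @not_ghostIdeal K k a Ha.
have [t2 [Ht2 Ht2K Hd2]] := @not_ghostIdeal K l' b Hb.
have := Hyp t1 t2 Ht1 Ht2; rewrite chain_ghostIdeal => /(_ (maxn t1 t2) (leqnn _)).
rewrite geq_max Ht1K Ht2K => /(_ isT).
rewrite ghost_mul !ghost_jnd_top ?leq_maxl ?leq_maxr // !ghost_res //.
by case/q_euclid.
Qed.

Lemma chain_strict k l : (k < l)%N -> strict_incl l (chain p q k.+1) (chain p q k).
Proof.
move=> Hk; split.
  by move=> j Hj a; rewrite !chain_ghostIdeal => H t Ht HtK; apply: H => //; lia.
exists k.+1; split => //.
have [v [c [Hc Hv]]] := @ghost_delta k.+1 k.+1 (leqnn _).
exists v; rewrite !chain_ghostIdeal; split.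
  move=> t Ht HtK; rewrite Hv //.
  by have -> : (t == k.+1) = false by apply/eqP; lia.
by move/(_ k.+1 (leqnn _) (leqnn _)); rewrite Hv // eqxx.
Qed.

Section Classification.
Variables (l : nat) (I : Fam).
Hypotheses (HI : OmegaIdeal p l I)
           (HI0 : forall a : Rk 0, I 0%N a <-> (q%:Z %| a ord0)%Z).

Definition forced_at (j t : nat) : Prop :=
  forall a, I j a -> (q%:Z %| ghost p t a)%Z.

Lemma I_contains_q j : (j <= l)%N -> I j (mono j q%:Z j).
Proof.
case: HI => Hid Hcl; elim: j => [|j IH] Hj.
  by apply/HI0; rewrite -ghost0 ghost_const.
have [Hind _ Hjnd] := Hcl j Hj.
apply: ideal_q_of_ind_jnd; first exact: Hid.
  by apply: Hind; apply: IH; lia.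
by apply: Hjnd; apply: IH; lia.
Qed.

(* ind and res show that forcing of a coordinate does not depend on the
   level; jnd shows that the forced diagonal coordinates are downward closed. *)
Lemma forced_at_succ s t : (s < l)%N -> (t <= s)%N ->
  forced_at s.+1 t <-> forced_at s t.
Proof.
case: HI => _ Hcl Hs Hts; have [Hind Hres _] := Hcl s Hs; split.
  move=> H x Ix; have := H _ (Hind _ Ix).
  by rewrite ghost_ind // => Hd; apply: (@q_dvd_pXM 1); rewrite expr1.
by move=> H a Ia; have := H _ (Hres _ Ia); rewrite ghost_res.
Qed.

Lemma forced_at_level j t : (t <= j)%N -> (j <= l)%N ->
  forced_at j t <-> forced_at t t.
Proof.
move=> Htj; rewrite -(subnKC Htj).
elim: (j - t)%N => [|d IH] Hd; first by rewrite addn0.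
by rewrite addnS forced_at_succ; [apply: IH | ..]; lia.
Qed.

Lemma forced_diag_pred s : (s < l)%N -> forced_at s.+1 s.+1 -> forced_at s s.
Proof.
case: HI => _ Hcl Hs H x Ix; have [_ _ Hjnd] := Hcl s Hs.
by have := H _ (Hjnd _ Ix); rewrite ghost_jnd_top.
Qed.

Lemma forced_segment : exists K, (K <= l)%N /\
  forall t, (t <= l)%N -> (forced_at t t <-> (t <= K)%N).
Proof.
suff : forall n, (n <= l)%N -> exists K, (K <= n)%N /\
    forall t, (t <= n)%N -> (forced_at t t <-> (t <= K)%N) by move/(_ l (leqnn _)).
elim=> [|n IH] Hn.
  exists 0%N; split=> // t Ht; have -> : t = 0%N by lia.
  by split=> // _ a /HI0; rewrite ghost0.
have [K [HKn HK]] := IH (ltnW Hn).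
case: (classic (forced_at n.+1 n.+1)) => Hnn.
  exists n.+1; split=> // t Ht; split=> // _.
  case: (leqP t n) => Htn; last by have -> : t = n.+1 by lia.
  have HnK : (n <= K)%N by apply/HK => //; apply: forced_diag_pred.
  by apply/HK => //; lia.
exists K; split; first lia.
move=> t Ht; case: (leqP t n) => Htn; first exact: HK.
have -> : t = n.+1 by lia.
by split=> // HH; lia.
Qed.

(* I_j consists of the a with q | ghost_t(a) at the forced t, i.e. t <= K. *)
Lemma classification : exists2 K, (K <= l)%N & same l I (chain p q K).
Proof.
have [K [HKl HK]] := forced_segment.
have Hforced : forall j t, (t <= j)%N -> (j <= l)%N -> forced_at j t <-> (t <= K)%N.
  by move=> j t Htj Hjl; rewrite forced_at_level // HK //; lia.
exists K => // j Hj a; rewrite chain_ghostIdeal; split.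
  by move=> Ia t Ht HtK; apply: (proj2 (Hforced j t Ht Hj) HtK).
move=> Ha; apply: (@ideal_of_forced j (I j) (proj1 HI j Hj) (@I_contains_q j Hj) a).
by move=> t Ht Ft; apply: Ha => //; apply/(Hforced j t Ht Hj).
Qed.

End Classification.

End Primes.

Theorem proposition6 (p q r l : nat) :
  prime p -> prime q -> q != p -> (l <= r)%N ->
  (forall k, (k <= l)%N ->
     OmegaIdeal p l (chain p q k) /\ PrimeIdeal p l (chain p q k)) /\
  (forall k, (k < l)%N -> strict_incl l (chain p q k.+1) (chain p q k)) /\
  (forall I : Fam, OmegaIdeal p l I ->
     (forall a : Rk 0, I 0%N a <-> (q%:Z %| a ord0)%Z) ->
     exists2 k, (k <= l)%N & same l I (chain p q k)).
Proof.
move=> pp pq qp _; split; [|split].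
- by move=> K _; split; [apply: chain_OmegaIdeal | apply: chain_PrimeIdeal].
- by move=> k; apply: chain_strict.
- by move=> I; apply: classification.
Qed.
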